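(* Let $k\ge 2$, $\tau=1000k$, $\rho=1-\frac{1}{10\tau}$, let $g:\{0,1\}^n\to\{0,1\}$ be a $k$-term DNF and $y\in\{0,1\}^n$. Then for any set $S\subseteq[n]$ consisting entirely of indices that are morally irrelevant for $g$, \[\left|T_\rho g(y)-T_\rho g(y^{\oplus S})\right|\le\frac{1}{k^{50}},\] where $y^{\oplus S}$ is obtained from $y$ by flipping the bits with indices in $S$.
   Context: A term is short if it has at most $\tau$ literals, medium if it has between $\tau+1$ and $1000\tau\log k$ literals, and long if it has more than $1000\tau\log k$ literals. An index $i\in[n]$ is morally irrelevant for $g$ if no short or medium term of $g$ contains $x_i$ or $\overline{x_i}$. For $x\in\{0,1\}^n$, $\mathbf{y}\sim N_\rho(x)$ means each bit independently has $\mathbf{y}_i=x_i$ with probability $\rho$ and $1-x_i$ with probability $1-\rho$; $T_\rho g(x)=\mathbb{E}_{\mathbf{y}\sim N_\rho(x)}[g(\mathbf{y})]$. *)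

From HB Require Import structures.
From mathcomp Require Import all_boot all_order all_algebra.
From mathcomp Require Import reals exp.
Set Implicit Arguments. Unset Strict Implicit. Unset Printing Implicit Defensive.
Import Order.TTheory GRing.Theory Num.Theory.
Local Open Scope ring_scope.

(* A literal on [n] variables: (i, b) stands for x_i when b = true and
   for the negation of x_i when b = false. *)
Definition literal (n : nat) := ('I_n * bool)%type.
Definition term (n : nat) := {set literal n}.
Definition dnf (n : nat) := seq (term n).

Definition point (n : nat) := {ffun 'I_n -> bool}.

Definition eval_term n (t : term n) (x : point n) : bool :=
  [forall l in t, x l.1 == l.2].
Definition eval_dnf n (f : dnf n) (x : point n) : bool :=
  has (fun t => eval_term t x) f.

Definition is_k_term_dnf n (k : nat) (f : dnf n) : Prop := (size f <= k)%N.

Definition log2 {R : realType} (x : R) : R := ln x / ln 2.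

Definition short_or_medium {R : realType} n (tau : R) (k : nat) (t : term n) : bool :=
  (#|t|%:R <= 1000 * tau * log2 (k%:R : R)).

Definition morally_irrelevant {R : realType} n (tau : R) (k : nat)
    (f : dnf n) (i : 'I_n) : Prop :=
  forall t, t \in f -> short_or_medium tau k t -> forall b, (i, b) \notin t.

Definition noise_prob {R : realType} n (rho : R) (y z : point n) : R :=
  \prod_(i < n) (if z i == y i then rho else 1 - rho).
Definition T_rho {R : realType} n (rho : R) (g : point n -> bool) (y : point n) : R :=
  \sum_(z : point n) noise_prob rho y z * (g z)%:R.

Definition flip n (S : {set 'I_n}) (y : point n) : point n :=
  [ffun i => if i \in S then ~~ y i else y i].

From HB Require Import structures.
From mathcomp Require Import all_boot all_order all_algebra.
From mathcomp Require Import reals exp sequences ring lra.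
Set Implicit Arguments. Unset Strict Implicit. Unset Printing Implicit Defensive.
Import Order.TTheory GRing.Theory Num.Theory.
Local Open Scope ring_scope.

(* Flipping the bits of [S] in [y] amounts to flipping them in the noisy sample [z], so the
   difference is at most E|g(z) - g(z^S)|. Short and medium terms do not mention [S] and take
   the same value at [z] and [z^S]; hence g(z) <> g(z^S) forces some long term to hold at [z]
   or at [z^S]. A long term has more than [500 tau log k] distinct variables, each hit by the
   noisy sample with probability at most [rho], so it holds with probability at most
   [rho ^ (500 tau log k) <= k^-52]. A union bound over at most [k] terms and two points gives
   [2k * k^-52 <= k^-50]. *)

Section NoiseOperator.
Variables (R : realType) (n : nat).
Implicit Types (r : R) (S : {set 'I_n}) (y z : point n) (t : term n).

Lemma flipK S : involutive (flip S).
Proof. by move=> z; apply/ffunP=> i; rewrite !ffunE; case: (i \in S); rewrite ?negbK. Qed.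

Lemma noise_prob_flip r S y z : noise_prob r (flip S y) (flip S z) = noise_prob r y z.
Proof. by apply: eq_bigr => i _; rewrite !ffunE; case: (i \in S); rewrite // eqb_negLR negbK. Qed.

Lemma noise_prob_ge0 r y z : 0 <= r <= 1 -> 0 <= noise_prob r y z.
Proof. by case/andP=> r0 r1; apply: prodr_ge0 => i _; case: ifP; rewrite ?subr_ge0. Qed.

Lemma eq_T_rho r (g h : point n -> bool) y : g =1 h -> T_rho r g y = T_rho r h y.
Proof. by move=> gh; apply: eq_bigr => z _; rewrite gh. Qed.

Lemma T_rho_flip r (g : point n -> bool) S y :
  T_rho r g (flip S y) = T_rho r (g \o flip S) y.
Proof.
rewrite /T_rho (reindex_inj (can_inj (flipK S))) /=.
by apply: eq_bigr => z _; rewrite noise_prob_flip.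
Qed.

Lemma natr_forall (I : finType) (P : pred I) : ([forall i, P i]%:R : R) = \prod_i (P i)%:R.
Proof.
have [allP | /forallPn[i /negbTE Pi]] := boolP [forall i, P i].
  by rewrite big1 // => i _; rewrite (forallP allP).
by rewrite (bigD1 i) //= Pi mul0r.
Qed.

Definition bit_mass r (a : bool) (c : pred bool) : R :=
  \sum_b (if b == a then r else 1 - r) * (c b)%:R.

Lemma T_rho_prod r (c : 'I_n -> pred bool) y :
  T_rho r (fun z => [forall i, c i (z i)]) y = \prod_i bit_mass r (y i) (c i).
Proof.
rewrite /T_rho /bit_mass bigA_distr_bigA /=.
by apply: eq_bigr => z _; rewrite natr_forall -big_split; apply: eq_bigr => i _; rewrite eq_sym.
Qed.

Lemma bit_mass_le1 r a c : 0 <= r <= 1 -> 0 <= bit_mass r a c <= 1.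
Proof.
case/andP=> r0 r1; rewrite /bit_mass big_bool /=.
by case: a; case: (c true); case: (c false) => /=; rewrite ?mulr1 ?mulr0; lra.
Qed.

Lemma bit_mass_le_single r a (c : pred bool) b0 :
  1 - r <= r -> r <= 1 -> (forall b, c b -> b = b0) -> bit_mass r a c <= r.
Proof.
move=> r1 r2 cb0; rewrite /bit_mass big_bool /=.
have [c_true | _] := boolP (c true).
  have -> : c false = false by apply/negP => /cb0; rewrite -(cb0 _ c_true).
  by case: a; rewrite /= ?mulr1 ?mulr0; lra.
by case: (c false); case: a; rewrite /= ?mulr1 ?mulr0; lra.
Qed.

Definition term_vars t : {set 'I_n} := [set l.1 | l in t].

Lemma card_term_le t : (#|t| <= 2 * #|term_vars t|)%N.
Proof.
have sub : t \subset setX (term_vars t) [set: bool].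
  by apply/subsetP => -[i b] lt; rewrite !inE /= andbT; apply/imsetP; exists (i, b).
by apply: leq_trans (subset_leq_card sub) _; rewrite cardsX cardsT card_bool mulnC.
Qed.

Definition term_allows t i (b : bool) := [forall l in t, (l.1 == i) ==> (b == l.2)].

Lemma eval_termE t z : eval_term t z = [forall i, term_allows t i (z i)].
Proof.
apply/forall_inP/forallP => [tz i | allows l lt].
  by apply/forall_inP => l lt; apply/implyP => /eqP <-; exact: tz.
by have /forall_inP/(_ l lt) := allows l.1; rewrite eqxx.
Qed.

Lemma term_allowsP t l b : l \in t -> term_allows t l.1 b -> b = l.2.
Proof. by move=> lt /forall_inP/(_ l lt); rewrite eqxx => /eqP. Qed.

(* The noise is independent across coordinates, and each variable of [t] must land on one
   prescribed value, an event of probability at most [r]. *)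
Lemma T_rho_term_le r t y :
  1 - r <= r -> r <= 1 -> T_rho r (eval_term t) y <= r ^+ #|term_vars t|.
Proof.
move=> r1 r2; have r01 : 0 <= r <= 1 by apply/andP; split; lra.
rewrite (eq_T_rho _ _ (eval_termE t)) T_rho_prod.
rewrite (bigID (mem (term_vars t))) /= -[X in _ <= X]mulr1 -prodr_const.
have mass01 i := bit_mass_le1 (y i) (term_allows t i) r01.
apply: ler_pM; try by apply: prodr_ge0 => i _; case/andP: (mass01 i).
- apply: ler_prod => _ /imsetP[l lt ->]; case/andP: (mass01 l.1) => -> _ /=.
  apply: (bit_mass_le_single _ r1 r2) => b; exact: term_allowsP.
- by apply: prodr_ile1 => i _; exact: mass01.
Qed.

End NoiseOperator.

Section FlipDnf.
Variables (R : realType) (n : nat) (tau : R) (k : nat).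
Implicit Types (r : R) (S : {set 'I_n}) (y z : point n) (t : term n) (f : dnf n).

Definition long_terms f := [seq t <- f | ~~ short_or_medium tau k t].

Lemma eval_term_flip t S z :
  [disjoint term_vars t & S] -> eval_term t (flip S z) = eval_term t z.
Proof.
move=> /disjointFr tS; apply: eq_forallb_in => l lt; rewrite ffunE tS //.
by apply/imsetP; exists l.
Qed.

Lemma irrelevant_disjoint_vars f S t :
  (forall i, i \in S -> morally_irrelevant tau k f i) ->
  t \in f -> short_or_medium tau k t -> [disjoint term_vars t & S].
Proof.
move=> hS tf sm; rewrite disjoint_subset; apply/subsetP => _ /imsetP[l lt ->].
apply/negP => lS; by have := hS _ lS t tf sm l.2; rewrite -surjective_pairing lt.
Qed.

Lemma eval_dnf_flip_le f S z :
  (forall i, i \in S -> morally_irrelevant tau k f i) ->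
  `|(eval_dnf f z)%:R - (eval_dnf f (flip S z))%:R| <=
  \sum_(t <- long_terms f) ((eval_term t z)%:R + (eval_term t (flip S z))%:R) :> R.
Proof.
move=> hS.
have [/hasP[t tL ht] | /hasPn noLong] :=
  boolP (has (fun t => eval_term t z || eval_term t (flip S z)) (long_terms f)).
  apply: (@le_trans _ _ 1).
    by case: eval_dnf; case: eval_dnf; rewrite /= ?subrr ?normr0 ?subr0 ?sub0r ?normrN ?normr1.
  rewrite (perm_big _ (perm_to_rem tL)) big_cons -[X in X <= _]addr0.
  apply: lerD; last by apply: sumr_ge0 => t' _; rewrite addr_ge0.
  by case/orP: ht => ->; rewrite ?lerDl ?lerDr.
suff -> : eval_dnf f (flip S z) = eval_dnf f z.
  by rewrite subrr normr0; apply: sumr_ge0 => t _; rewrite addr_ge0.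
apply: eq_in_has => t tf /=.
have [sm | nsm] := boolP (short_or_medium tau k t).
  exact/eval_term_flip/(irrelevant_disjoint_vars hS).
have /noLong : t \in long_terms f by rewrite mem_filter nsm.
by case: eval_term; case: eval_term.
Qed.

Lemma T_rho_dnf_flip_le r f S y :
  0 <= r <= 1 -> (forall i, i \in S -> morally_irrelevant tau k f i) ->
  `|T_rho r (eval_dnf f) y - T_rho r (eval_dnf f) (flip S y)| <=
  \sum_(t <- long_terms f) (T_rho r (eval_term t) y + T_rho r (eval_term t) (flip S y)).
Proof.
move=> r01 hS; rewrite T_rho_flip [in X in X <= _]/T_rho -sumrB.
apply: le_trans (ler_norm_sum _ _ _) _.
apply: le_trans (_ : \sum_z noise_prob r y z *
  \sum_(t <- long_terms f) ((eval_term t z)%:R + (eval_term t (flip S z))%:R) <= _).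
  apply: ler_sum => z _; rewrite -mulrBr normrM ger0_norm ?noise_prob_ge0 //.
  by apply: ler_wpM2l; [exact: noise_prob_ge0 | exact: eval_dnf_flip_le].
under [X in _ <= X]eq_bigr => t _ do rewrite T_rho_flip /T_rho -big_split.
rewrite exchange_big; apply: ler_sum => z _; rewrite mulr_sumr.
by apply: ler_sum => t _; rewrite mulrDr.
Qed.

End FlipDnf.

Section Decay.
Variable R : realType.

Lemma ln2_le : ln (2 : R) <= 25 / 26.
Proof.
have two_le : (2 : R) <= expR (25 / 26).
  have -> : (25 / 26 : R) = 2%:R * (25 / 52) by field.
  rewrite expRM_natl; have := expR_ge1Dx (25 / 52 : R); set a := expR _ => ha.
  rewrite expr2; nra.
by rewrite -[X in _ <= X]expRK ler_ln // posrE ?expR_gt0.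
Qed.

Lemma expr_1Bx_le_expR (x : R) m : 0 <= x <= 1 -> (1 - x) ^+ m <= expR (- (x * m%:R)).
Proof.
case/andP=> x0 x1; rewrite mulrC -mulrN expRM_natl.
apply: lerXn2r; rewrite ?nnegrE ?expR_ge0 ?subr_ge0 //.
by have := expR_ge1Dx (- x); rewrite addrC.
Qed.

(* The hypothesis gives [x m > 50 log2 K]; [ln 2 <= 25/26] turns this into [x m >= 52 ln K]. *)
Lemma rho_pow_le (K : R) m :
  2 <= K -> 1000 * (1000 * K) * log2 K < 2 * m%:R ->
  (1 - (10 * (1000 * K))^-1) ^+ m <= (K ^+ 52)^-1.
Proof.
move=> K2 hm; set x := (10 * (1000 * K))^-1.
have x0 : 0 < x by rewrite invr_gt0; lra.
have xK : x * (10 * (1000 * K)) = 1 by rewrite mulVf //; lra.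
apply: le_trans (expr_1Bx_le_expR m _) _; first by rewrite ltW // /x invf_le1; lra.
have -> : (K ^+ 52)^-1 = expR (- (52%:R * ln K)) by rewrite expRN expRM_natl lnK // posrE; lra.
rewrite ler_expR lerN2.
have l20 : 0 < ln (2 : R) by apply: ln_gt0; lra.
have lK0 : 0 <= ln K by apply: ln_ge0; lra.
move: hm; rewrite /log2; set q := ln K / ln 2 => hm.
have q0 : 0 <= q by rewrite divr_ge0 // ltW.
have lnKq : 52 * ln K <= 50 * q.
  have -> : ln K = q * ln 2 by rewrite mulfVK // gt_eqF.
  have := ln2_le; nra.
nra.
Qed.

End Decay.

Section PaperParameters.
Variable R : realType.

Lemma rho_bounds (K : R) : 2 <= K ->
  1 - (1 - (10 * (1000 * K))^-1) <= 1 - (10 * (1000 * K))^-1 <= 1.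
Proof.
move=> K2; have x0 : 0 < (10 * (1000 * K))^-1 by rewrite invr_gt0; lra.
have x1 : (10 * (1000 * K))^-1 <= 2^-1 by rewrite lef_pV2 ?posrE; lra.
by apply/andP; split; lra.
Qed.

Lemma long_term_T_rho_le (k n : nat) (t : term n) (y : point n) :
  (2 <= k)%N -> ~~ short_or_medium (1000 * k%:R : R) k t ->
  T_rho (1 - (10 * (1000 * k%:R))^-1) (eval_term t) y <= (k%:R ^+ 52)^-1 :> R.
Proof.
move=> k2 long; have K2 : (2 : R) <= k%:R by rewrite (ler_nat R 2 k).
have /andP[r1 r2] := rho_bounds K2.
apply: le_trans (T_rho_term_le t y r1 r2) (rho_pow_le K2 _).
apply: lt_le_trans (_ : #|t|%:R <= _); first by rewrite ltNge.
by rewrite -natrM ler_nat card_term_le.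
Qed.

Lemma union_bound_le (k m : nat) : (2 <= k)%N -> (m <= k)%N ->
  ((k%:R ^+ 52)^-1 + (k%:R ^+ 52)^-1) *+ m <= (k%:R ^+ 50)^-1 :> R.
Proof.
move=> k2 mk; have K2 : (2 : R) <= k%:R by rewrite (ler_nat R 2 k).
have c0 : 0 <= (k%:R ^+ 52)^-1 :> R by rewrite invr_ge0 exprn_ge0 //; lra.
apply: le_trans (ler_wpMn2l (addr_ge0 c0 c0) mk) _.
have -> : ((k%:R ^+ 52)^-1 + (k%:R ^+ 52)^-1) *+ k = (k%:R ^+ 50)^-1 * (2 / k%:R) :> R.
  by rewrite -mulr_natr; field; lra.
rewrite -[X in _ <= X]mulr1 ler_wpM2l ?invr_ge0 ?exprn_ge0 ?ler_pdivrMr //; lra.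
Qed.

End PaperParameters.

Theorem claim6p7 (R : realType) (k n : nat) (f : dnf n) (y : point n)
    (S : {set 'I_n}) :
  let tau : R := 1000 * k%:R in
  let rho : R := 1 - (10 * tau)^-1 in
  (2 <= k)%N ->
  is_k_term_dnf k f ->
  (forall i, i \in S -> morally_irrelevant tau k f i) ->
  `| T_rho rho (eval_dnf f) y - T_rho rho (eval_dnf f) (flip S y) |
    <= (k%:R ^+ 50)^-1.
Proof.
move=> tau rho k2 hk hS.
have K2 : (2 : R) <= k%:R by rewrite (ler_nat R 2 k).
have /andP[r1 r2] : 1 - rho <= rho <= 1 := rho_bounds K2.
apply: le_trans (T_rho_dnf_flip_le y _ hS) _; first by apply/andP; split; lra.
apply: le_trans (_ : \sum_(t <- long_terms tau k f)
  ((k%:R ^+ 52)^-1 + (k%:R ^+ 52)^-1) <= _).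
  rewrite big_seq [X in _ <= X]big_seq; apply: ler_sum => t.
  by rewrite mem_filter => /andP[long _]; rewrite lerD ?long_term_T_rho_le.
rewrite big_const_seq count_predT iter_addr_0 union_bound_le //.
by rewrite size_filter (leq_trans (count_size _ _) hk).
Qed.
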